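(* Let $n\geq k\geq 4$ with $k\equiv 0\pmod 4$, and let $c\geq1$. Then there exists a diagonal $\mathrm{MS}^0_\Gamma(n,n;k,k;c)$ for every abelian group $\Gamma\in\mathcal G$ of order $nkc$.
   Context: Let $(\Gamma,+)$ be an abelian group. A partially filled array is an array in which some cells may be empty. A zero-sum magic partially filled array set $\mathrm{MS}^0_\Gamma(n,n;k,k;c)$ is a set of $c$ partially filled $n\times n$ arrays with entries in $\Gamma$ such that every element of $\Gamma$ appears exactly once in exactly one of the arrays, every array has exactly $k$ filled cells in each row and each column, and in every array the entries of each row and each column sum to $0_\Gamma$. For an $n\times n$ partially filled array, cell $(i,j)$ belongs to the diagonal $D_r$ if $j-i\equiv r\pmod n$; the array is $k$-diagonal if its nonempty cells are exactly those of $k$ consecutive diagonals (indices mod $n$); the set is diagonal if every member is $k$-diagonal. $\mathcal G$ is the set of all finite abelian groups that either have odd order or contain more than one element of order $2$. *)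

From HB Require Import structures.
From mathcomp Require Import all_boot all_order all_algebra.
Set Implicit Arguments. Unset Strict Implicit. Unset Printing Implicit Defensive.
Import GRing.Theory.
Local Open Scope ring_scope.

(* A partially filled n x n array over G: cell (i,j) is None if empty,
   Some g if it contains g. *)
Definition pfarray (G : Type) (n : nat) := 'I_n -> 'I_n -> option G.

Definition entry (G : zmodType) n (A : pfarray G n) i j : G := odflt 0 (A i j).

Definition order2_elems (G : finZmodType) : {set G} :=
  [set x : G | (x != 0) && (x + x == 0)].

Definition in_classG (G : finZmodType) : Prop :=
  odd #|G| \/ (1 < #|order2_elems G|)%N.

(* cell (i,j) belongs to diagonal D_r iff j - i = r (mod n) *)
Definition on_diag n (r : nat) (i j : 'I_n) : bool :=
  ((j + (n - i)) %% n == r %% n)%N.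

Definition k_diagonal (G : Type) n (k : nat) (A : pfarray G n) : Prop :=
  exists r : 'I_n, forall i j : 'I_n,
    (isSome (A i j) : bool) = [exists s : 'I_k, on_diag (r + s)%N i j].

Definition zero_sum_MS (G : finZmodType) n k c (A : 'I_c -> pfarray G n) : Prop :=
  [/\
      forall g : G,
        #|[set t : 'I_c * ('I_n * 'I_n) | A t.1 t.2.1 t.2.2 == Some g]| = 1%N,
      forall a i, #|[set j | isSome (A a i j)]| = k,
      forall a j, #|[set i | isSome (A a i j)]| = k,
      forall a i, \sum_(j < n) entry (A a) i j = 0
    & forall a j, \sum_(i < n) entry (A a) i j = 0].

Definition diagonal_MS (G : finZmodType) n k c (A : 'I_c -> pfarray G n) : Prop :=
  zero_sum_MS k A /\ forall a, k_diagonal k (A a).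

From mathcomp Require Import all_boot all_order all_algebra zify.
Set Implicit Arguments. Unset Strict Implicit. Unset Printing Implicit Defensive.
Import GRing.Theory.
Local Open Scope ring_scope.

(* The order nkc is divisible by 4, so G has two distinct involutions and the
   subgroup 2G of doubles has index at least 4.  A maximal subgroup S containing
   2G and avoiding t, C and t + C, for suitable t and C, has index 4:
   G/S = {S, t + S, C + S, t + C + S} is a Klein four-group, and the four maps
   p |-> p, t - p, C - p, p - t - C send S bijectively onto its four cosets.
   Label the elements of S as p(a, b, x), with a < c, b < k/4 and x in Z_n.
   Array a places p(a,b,i), t - p(a,b,i+1), C - p(a,b,i), p(a,b,i+1) - t - C in
   row i on the diagonals 4b, ..., 4b+3: every row and every column of such a
   block of four diagonals sums to 0, and every element of G is used once. *)

Section KleinTranslates.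
Variables (G : zmodType) (t C : G).

Definition klein_translate (s : nat) (p : G) : G :=
  match s with 0 => p | 1 => t - p | 2 => C - p | _ => p - t - C end.

Lemma klein_translateI s : injective (klein_translate s).
Proof.
by case: s => [|[|[|s]]] p q //=;
  [move/addrI/oppr_inj | move/addrI/oppr_inj | move/addIr/addIr].
Qed.

Lemma klein_translate_row_sum p q :
  \sum_(s < 4) klein_translate s (if odd s then q else p) = 0.
Proof.
rewrite !big_ord_recl big_ord0 /= addr0 (addrCA p) [p + _]addrA subrKC.
by rewrite [C + _]addrC subrK subrKA; apply: subrr.
Qed.

Lemma klein_translate_col_sum p q :
  \sum_(s < 4) klein_translate s (if (s < 2)%N then p else q) = 0.
Proof.
rewrite !big_ord_recl big_ord0 /= addr0 addrA subrKC [C - q + _]addrC subrKA.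
by rewrite addrAC subrr sub0r; apply: subrr.
Qed.

End KleinTranslates.

Definition doubles (G : finZmodType) : {set G} := [set x + x | x : G].

Lemma card_doubles_mul_le (G : finZmodType) (V : {set G}) :
  {in V, forall v, v + v = 0} -> (#|doubles G| * #|V| <= #|G|)%N.
Proof.
move=> V2.
(* each y in 2G has the #|V| distinct halves half y + v, v in V *)
pose half (y : G) : G := odflt 0 [pick x | x + x == y].
have halfK : {in doubles G, forall y, half y + half y = y}.
  move=> _ /imsetP[x _ ->]; rewrite /half.
  by case: pickP => [z /eqP // | /(_ x)]; rewrite eqxx.
pose F (yv : G * G) := half yv.1 + yv.2.
have F_inj : {in setX (doubles G) V &, injective F}.
  move=> [y1 v1] [y2 v2] /setXP[y1D v1V] /setXP[y2D v2V]; rewrite /F /= => E.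
  have : (half y1 + v1) + (half y1 + v1) = (half y2 + v2) + (half y2 + v2).
    by rewrite E.
  rewrite addrACA [RHS]addrACA (V2 v1) // (V2 v2) // !addr0 !halfK // => Ey.
  by rewrite Ey in E *; rewrite (addrI _ E).
by rewrite -cardsX -(card_in_imset F_inj) max_card.
Qed.

Lemma four_card_doubles_le (G : finZmodType) :
  (1 < #|order2_elems G|)%N -> (4 * #|doubles G| <= #|G|)%N.
Proof.
case/card_gt1P=> e [f []]; rewrite !inE => /andP[e0 /eqP ee] /andP[f0 /eqP ff] ef.
pose V := [set x in [:: 0; e; f; e + f]].
have V2 : {in V, forall v, v + v = 0}.
  move=> v; rewrite !inE => /or4P[] /eqP-> //; first exact: addr0.
  by rewrite addrACA ee ff addr0.
have cardV : #|V| = 4%N.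
  have Nf : f = - f by apply/eqP; rewrite -addr_eq0 ff.
  have ef0 : e + f != 0 by rewrite addr_eq0 -Nf.
  have e_ef : e != e + f by rewrite -{1}[e]addr0 (inj_eq (addrI e)) eq_sym.
  have f_ef : f != e + f by rewrite -{1}[f]add0r (inj_eq (addIr f)) eq_sym.
  rewrite cardsE; apply/card_uniqP; rewrite /= !inE !negb_or.
  by rewrite !(eq_sym 0) e0 f0 ef0 ef e_ef f_ef.
by rewrite mulnC -cardV card_doubles_mul_le.
Qed.

Section KleinAvoiding.
Variables (G : finZmodType) (t C : G).
Implicit Types (S : {set G}) (g p q x y : G).

Definition klein_avoiding S : bool :=
  [&& 0 \in S, [forall x in S, forall y in S, x - y \in S], doubles G \subset S
    & [&& t \notin S, C \notin S & t + C \notin S]].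

Lemma klein_avoidingP S :
  reflect [/\ 0 \in S, {in S &, forall x y, x - y \in S}, doubles G \subset S
            & [/\ t \notin S, C \notin S & t + C \notin S]]
          (klein_avoiding S).
Proof.
apply: (iffP and4P) => [[S0 SB S2 /and3P tCS] | [S0 SB S2 /and3P tCS]].
  by split=> // x y xS yS; move/forall_inP/(_ x xS)/forall_inP: SB; apply.
by split=> //; apply/forall_inP=> x xS; apply/forall_inP=> y yS; apply: SB.
Qed.

Section Avoiding.
Variable S : {set G}.
Hypothesis avS : klein_avoiding S.

Lemma avoiding0 : 0 \in S.
Proof. by case/klein_avoidingP: avS. Qed.

Lemma avoiding_subr : {in S &, forall x y, x - y \in S}.
Proof. by case/klein_avoidingP: avS. Qed.

Lemma avoiding_opprE x : (- x \in S) = (x \in S).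
Proof.
have N x' : x' \in S -> - x' \in S.
  by move=> x'S; rewrite -sub0r avoiding_subr // avoiding0.
by apply/idP/idP => [/N|/N //]; rewrite opprK.
Qed.

Lemma avoiding_addr : {in S &, forall x y, x + y \in S}.
Proof. by move=> x y xS yS; rewrite -[y]opprK avoiding_subr // avoiding_opprE. Qed.

Lemma avoiding_double x : x + x \in S.
Proof.
by case/klein_avoidingP: avS => _ _ /subsetP S2 _; apply/S2/imsetP; exists x.
Qed.

Lemma avoiding_add_double x y : (y + y + x \in S) = (x \in S).
Proof.
apply/idP/idP => [|xS]; last by rewrite avoiding_addr ?avoiding_double.
by move/avoiding_subr/(_ (avoiding_double y)); rewrite [_ + x]addrC addrK.
Qed.

Lemma avoiding_klein : [/\ t \notin S, C \notin S & t + C \notin S].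
Proof. by case/klein_avoidingP: avS. Qed.

Lemma klein_translate_coset (s : 'I_4) p :
  p \in S -> klein_translate t C s p - klein_translate t C s 0 \in S.
Proof.
move=> pS; case: s => -[|[|[|[|//]]]] _ /=; rewrite ?subr0 //.
- by rewrite addrAC subrr add0r avoiding_opprE.
- by rewrite addrAC subrr add0r avoiding_opprE.
- by rewrite sub0r opprB opprK addrA !subrK.
Qed.

Lemma klein_coset_rep_inj (s s' : 'I_4) :
  klein_translate t C s 0 - klein_translate t C s' 0 \in S -> s = s'.
Proof.
have [tS CS tCS] := avoiding_klein.
wlog le_ss' : s s' / (s <= s')%N.
  move=> hwlog; case: (leqP s s') => [/hwlog //|/ltnW le_s's].
  by rewrite -avoiding_opprE opprB => /hwlog->.
case: s s' le_ss' => -[|[|[|[|//]]]] ? -[[|[|[|[|//]]]] ?] //= _;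
  try by move=> _; apply/val_inj.
all: apply: contraTeq => _; rewrite ?subr0 ?sub0r ?avoiding_opprE //.
- by rewrite -opprD avoiding_opprE.
- by rewrite -(avoiding_add_double _ C) addrC -addrA addKr.
- by rewrite opprB opprK addrCA addrC avoiding_add_double.
- by rewrite opprB opprK addrA avoiding_add_double.
Qed.

Lemma klein_translate_inj (s s' : 'I_4) p q : p \in S -> q \in S ->
  klein_translate t C s p = klein_translate t C s' q -> s = s' /\ p = q.
Proof.
move=> pS qS E; have ss' : s = s'.
  apply: klein_coset_rep_inj.
  have := avoiding_subr (klein_translate_coset s' qS) (klein_translate_coset s pS).
  by rewrite -E opprB addrC addrA subrK.
by split=> //; move: E; rewrite ss' => /klein_translateI.
Qed.

Lemma klein_avoiding_extend g :
  g \notin S -> t - g \notin S -> C - g \notin S -> g + t + C \notin S ->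
  klein_avoiding (S :|: [set g + y | y in S]).
Proof.
move=> gS tgS CgS gtCS; have [tS CS tCS] := avoiding_klein.
have memgS x : (x \in [set g + y | y in S]) = (x - g \in S).
  apply/imsetP/idP => [[y yS ->] | xgS]; first by rewrite addrC addKr.
  by exists (x - g); rewrite // addrC subrK.
apply/klein_avoidingP; split.
- by rewrite inE avoiding0.
- move=> x y; rewrite !inE !memgS => /orP[xS | xgS] /orP[yS | ygS].
  + by rewrite (avoiding_subr xS yS).
  + have -> : x - y - g = x - (y - g) - (g + g).
      by rewrite opprB opprD !addrA (addrAC (x + g - y)) (addrAC x g) addrK.
    by rewrite (avoiding_subr (avoiding_subr xS ygS) (avoiding_double g)) orbT.
  + by rewrite addrAC (avoiding_subr xgS yS) orbT.
  + have -> : x - y = (x - g) - (y - g) by rewrite opprB addrA subrK.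
    by rewrite (avoiding_subr xgS ygS).
- by apply/subsetP=> _ /imsetP[x _ ->]; rewrite inE avoiding_double.
- rewrite !inE !memgS !negb_or tS CS tCS tgS CgS; split=> //.
  by rewrite -(avoiding_add_double _ g) [g + g + _]addrC addrA subrK addrC addrA.
Qed.

Lemma card_klein_avoiding :
  (forall g, exists (s : 'I_4) p, p \in S /\ klein_translate t C s p = g) ->
  (4 * #|S| = #|G|)%N.
Proof.
move=> cover; pose F (ps : G * 'I_4) := klein_translate t C ps.2 ps.1.
have F_inj : {in setX S setT &, injective F}.
  move=> [p s] [q s'] /setXP[pS _] /setXP[qS _].
  by case/(klein_translate_inj pS qS) => /= -> ->.
have F_onto : F @: setX S setT = setT.
  apply/setP=> g; rewrite inE; have [s [p [pS <-]]] := cover g.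
  by apply/imsetP; exists (p, s); rewrite ?in_setX ?pS ?in_setT.
by rewrite -cardsT -F_onto card_in_imset // cardsX cardsT card_ord mulnC.
Qed.

End Avoiding.
End KleinAvoiding.

Lemma exists_klein_avoiding_doubles (G : finZmodType) :
  (4 * #|doubles G| <= #|G|)%N -> exists t C : G, klein_avoiding t C (doubles G).
Proof.
move=> le_4D_G; set D := doubles G in le_4D_G *.
have D_gt0 : (0 < #|D|)%N.
  by apply/card_gt0P; exists 0; apply/imsetP; exists 0; rewrite ?addr0.
have outside (A : {set G}) : (#|A| < #|G|)%N -> exists x, x \notin A.
  move=> ltAG; have /card_gt0P[x] : (0 < #|~: A|)%N by rewrite cardsCs setCK subn_gt0.
  by rewrite inE; exists x.
have [t tD] : exists t, t \notin D by apply: outside; apply: leq_trans le_4D_G; lia.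
have [C] : exists C, C \notin D :|: [set t + x | x in D].
  apply: outside; apply: (@leq_ltn_trans (#|D| * 2)).
    by rewrite muln2 -addnn (leq_trans (leq_card_setU _ _)) // leq_add2l leq_imset_card.
  by apply: leq_trans le_4D_G; lia.
rewrite !inE negb_or => /andP[CD tCD].
exists t, C; apply/klein_avoidingP; split=> //.
- by apply/imsetP; exists 0; rewrite ?addr0.
- move=> _ _ /imsetP[x _ ->] /imsetP[y _ ->]; apply/imsetP; exists (x - y) => //.
  by rewrite opprD !addrA (addrAC x x) (addrAC (x - y)).
- split=> //; apply: contra tCD => /imsetP[x _ tC_xx].
  apply/imsetP; exists ((x - t) + (x - t)); first by apply/imsetP; exists (x - t).
  by rewrite addrACA -tC_xx -opprD !addrA (addrC (t + t)) addrK.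
Qed.

Lemma exists_klein_kernel (G : finZmodType) :
  (4 * #|doubles G| <= #|G|)%N ->
  exists (t C : G) (S : {set G}), klein_avoiding t C S /\ (4 * #|S| = #|G|)%N.
Proof.
move=> /exists_klein_avoiding_doubles[t [C avD]].
exists t, C, [arg max_(S > doubles G | klein_avoiding t C S) #|S|].
case: (arg_maxnP (fun S : {set G} => #|S|) avD) => S avS maxS; split=> //.
apply: (card_klein_avoiding avS) => g.
have [gS|gS] := boolP (g \in S); first by exists 0, g.
have [tgS|tgS] := boolP (t - g \in S).
  by exists 1, (t - g); rewrite /= subKr.
have [CgS|CgS] := boolP (C - g \in S).
  by exists 2, (C - g); rewrite /= subKr.
have [gtCS|gtCS] := boolP (g + t + C \in S).
  by exists 3, (g + t + C); split=> //=; rewrite (addrAC g t C) !addrK.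
have S_proper : S \proper S :|: [set g + y | y in S].
  apply: properUl; apply/subsetPn; exists g => //.
  by apply/imsetP; exists 0; rewrite ?addr0 ?(avoiding0 avS).
have := maxS _ (klein_avoiding_extend avS gS tgS CgS gtCS).
by rewrite /= leqNgt proper_card.
Qed.

Lemma sum_ord_blocks (R : nmodType) (n m r : nat) (F : nat -> R) :
  (m * r <= n)%N -> (forall d, (m * r <= d < n)%N -> F d = 0) ->
  \sum_(d < n) F d = \sum_(b < m) \sum_(s < r) F (b * r + s)%N.
Proof.
move=> le_mr_n F0.
rewrite -(big_mkord xpredT) (big_cat_nat (leq0n _) le_mr_n) /=.
rewrite [X in _ + X]big_nat_cond [X in _ + X]big1 ?addr0; last by move=> d /andP[/F0].
rewrite big_nat_mul big_mkord; apply: eq_bigr => b _.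
rewrite -{1}[(b * r)%N]add0n big_addn mulSn addnK big_mkord.
by apply: eq_bigr => s _; rewrite addnC.
Qed.

Lemma card_ord_lt (n k : nat) : (k <= n)%N -> #|[set d : 'I_n | (d < k)%N]| = k.
Proof.
move=> le_kn; have widen_inj : injective (widen_ord le_kn).
  by move=> x y /(congr1 val) /= /val_inj.
rewrite -[RHS](card_ord k) -(card_imset _ widen_inj).
apply: eq_card => d; rewrite !inE; apply/idP/imsetP => [lt_dk | [e _ ->]].
  by exists (Ordinal lt_dk); last by apply/val_inj.
exact: (ltn_ord e).
Qed.

Lemma subr_natS (R : pzRingType) (x : R) d : x - d.+1%:R + 1 = x - d%:R.
Proof. by rewrite mulrSr opprD addrA subrK. Qed.

Section DiagonalArrays.
Variables (G : finZmodType) (t C : G) (c m' n' : nat).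
Local Notation m := m'.+1.
Local Notation n := n'.+2.
Local Notation k := (m * 4)%N.
Hypothesis k_le_n : (k <= n)%N.
Variable lab : 'I_c * 'I_m * 'I_n -> G.

Definition cell_value (u : 'I_c * 'I_m * 'I_n * 'I_4) : G :=
  klein_translate t C u.2 (lab u.1).

Hypothesis cell_value_bij : bijective cell_value.

Definition diag_array (a : 'I_c) : pfarray G n := fun i j =>
  let d := nat_of_ord (j - i)%R in
  if (d < k)%N then
    Some (cell_value (a, inord (d %/ 4), i + (odd (d %% 4))%:R, inord (d %% 4)))
  else None.

Lemma diag_array_isSome a i j : isSome (diag_array a i j) = (nat_of_ord (j - i)%R < k)%N.
Proof. by rewrite /diag_array; case: ifP. Qed.

Lemma val_addKr_nat (i : 'I_n) d : (d < n)%N -> nat_of_ord (i + d%:R - i)%R = d.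
Proof. by move=> lt_dn; rewrite addrAC subrr add0r Zp_nat /= modn_small. Qed.

Lemma diag_array_block a i (b : 'I_m) (s : 'I_4) :
  diag_array a i (i + (b * 4 + s)%:R) = Some (cell_value (a, b, i + (odd s)%:R, s)).
Proof.
have lt_b := ltn_ord b; have lt_s := ltn_ord s.
have lt_dk : (b * 4 + s < k)%N by lia.
rewrite /diag_array val_addKr_nat ?(leq_trans lt_dk) //.
have -> : ((b * 4 + s) %/ 4 = b)%N by lia.
have -> : ((b * 4 + s) %% 4 = s)%N by lia.
by rewrite !inord_val.
Qed.

Lemma diag_array_row_sum a i : \sum_(j < n) entry (diag_array a) i j = 0.
Proof.
rewrite (reindex_inj (addrI i)) /=.
pose F d := entry (diag_array a) i (i + d%:R).
rewrite (eq_bigr (fun d : 'I_n => F d)) => [|d _]; last by rewrite /F natr_Zp.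
rewrite (sum_ord_blocks k_le_n) => [|d /andP[le_kd lt_dn]]; last first.
  by rewrite /F /entry /diag_array val_addKr_nat // ltnNge le_kd.
rewrite big1 // => b _.
rewrite (eq_bigr (fun s : 'I_4 => klein_translate t C s
          (if odd s then lab (a, b, i + 1) else lab (a, b, i)))).
  exact: klein_translate_row_sum.
move=> s _; rewrite /F /entry diag_array_block /cell_value /=.
by case: (odd s); rewrite ?addr0.
Qed.

Lemma diag_array_col_sum a j : \sum_(i < n) entry (diag_array a) i j = 0.
Proof.
rewrite (reindex_inj (subrI j)) /=.
pose F d := entry (diag_array a) (j - d%:R) (j - d%:R + d%:R).
rewrite (eq_bigr (fun d : 'I_n => F d)) => [|d _]; last by rewrite /F natr_Zp subrK.
rewrite (sum_ord_blocks k_le_n) => [|d /andP[le_kd lt_dn]]; last first.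
  by rewrite /F /entry /diag_array val_addKr_nat // ltnNge le_kd.
rewrite big1 // => b _.
rewrite (eq_bigr (fun s : 'I_4 => klein_translate t C s
          (if (s < 2)%N then lab (a, b, j - (b * 4)%:R)
           else lab (a, b, j - (b * 4 + 2)%:R)))).
  exact: klein_translate_col_sum.
move=> s _; rewrite /F /entry diag_array_block /cell_value /=.
by case: s => -[|[|[|[|//]]]] lt_s /=; rewrite ?addr0 ?addnS ?subr_natS ?addn0.
Qed.

Lemma diag_array_row_card a i : #|[set j | isSome (diag_array a i j)]| = k.
Proof.
rewrite -(card_ord_lt k_le_n) -[RHS](card_preimset _ (addIr (- i))).
by apply: eq_card => j; rewrite !inE diag_array_isSome.
Qed.

Lemma diag_array_col_card a j : #|[set i | isSome (diag_array a i j)]| = k.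
Proof.
rewrite -(card_ord_lt k_le_n) -[RHS](card_preimset _ (subrI j)).
by apply: eq_card => i; rewrite !inE diag_array_isSome.
Qed.

Lemma diag_array_k_diagonal a : k_diagonal k (diag_array a).
Proof.
exists ord0 => i j; rewrite diag_array_isSome.
have val_sub : nat_of_ord (j - i)%R = ((j + (n - i)) %% n)%N by rewrite /= modnDmr.
rewrite /on_diag -val_sub.
apply/idP/existsP => [lt_dk | [s]].
  by exists (Ordinal lt_dk); rewrite modn_small // (leq_trans lt_dk).
by rewrite (modn_small (leq_trans (ltn_ord s) k_le_n)) => /eqP->.
Qed.

Definition cell_of (u : 'I_c * 'I_m * 'I_n * 'I_4) : 'I_c * ('I_n * 'I_n) :=
  let: (a, b, x, s) := u in
  (a, (x - (odd s)%:R, x - (odd s)%:R + (b * 4 + s)%:R)).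

Lemma diag_array_cell_of u :
  diag_array (cell_of u).1 (cell_of u).2.1 (cell_of u).2.2 = Some (cell_value u).
Proof. by case: u => [[[a b] x] s]; rewrite /= diag_array_block subrK. Qed.

Lemma diag_array_SomeP a i j v :
  diag_array a i j = Some v -> exists u, cell_of u = (a, (i, j)) /\ cell_value u = v.
Proof.
rewrite /diag_array; set d := nat_of_ord (j - i)%R; case: ifP => // lt_dk [<-].
exists (a, inord (d %/ 4), i + (odd (d %% 4))%:R, inord (d %% 4)); split=> //=.
have lt_s : (d %% 4 < 4)%N by rewrite ltn_mod.
have lt_b : (d %/ 4 < m)%N by rewrite ltn_divLR.
by rewrite !inordK // -divn_eq addrK /d natr_Zp subrKC.
Qed.

Lemma diag_array_value_once v :
  #|[set p : 'I_c * ('I_n * 'I_n) | diag_array p.1 p.2.1 p.2.2 == Some v]| = 1%N.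
Proof.
have [cell_pos valK posK] := cell_value_bij.
rewrite (_ : [set p | _] = [set cell_of (cell_pos v)]) ?cards1 //.
apply/setP=> p; rewrite !inE; apply/eqP/eqP => [|->].
  by case: p => a [i j] /diag_array_SomeP[u [<- <-]]; rewrite valK.
by rewrite diag_array_cell_of posK.
Qed.

Lemma diag_array_MS : diagonal_MS k diag_array.
Proof.
split; last exact: diag_array_k_diagonal.
split; [exact: diag_array_value_once | exact: diag_array_row_card
  | exact: diag_array_col_card | exact: diag_array_row_sum | exact: diag_array_col_sum].
Qed.

End DiagonalArrays.

Theorem mainTheorem9 (n k c : nat) :
  (4 <= k)%N -> (k <= n)%N -> (k %% 4 = 0)%N -> (1 <= c)%N ->
  forall G : finZmodType, in_classG G -> #|G| = (n * k * c)%N ->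
  exists A : 'I_c -> pfarray G n, diagonal_MS k A.
Proof.
move=> le_4k le_kn k_mod4 _ G classG cardG.
have [m' k_eq] : exists m', k = (m'.+1 * 4)%N.
  by exists (k %/ 4).-1; rewrite prednK ?divn_gt0 // {1}(divn_eq k 4) k_mod4 addn0.
have [n' n_eq] : exists n', n = n'.+2 by exists n.-2; lia.
subst k n.
have two_inv : (1 < #|order2_elems G|)%N.
  by case: classG => //; rewrite cardG !oddM /= !andbF.
have [t [C [S [avS cardS]]]] := exists_klein_kernel (four_card_doubles_le two_inv).
have cardT : #|{: 'I_c * 'I_m'.+1 * 'I_n'.+2}| = #|S|.
  by rewrite !card_prod !card_ord; move: cardS; rewrite cardG; nia.
pose lab u := enum_val (cast_ord cardT (enum_rank u)).
exists (diag_array t C lab); apply: diag_array_MS => //.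
apply: inj_card_bij => [[u s] [v s']|].
  case/(klein_translate_inj avS (enum_valP _) (enum_valP _)) => /= -> .
  by move/enum_val_inj/cast_ord_inj/enum_rank_inj->.
by rewrite card_prod cardT card_ord mulnC cardS.
Qed.
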